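(* Let $m,n\ge 0$ with $m+n\ge 1$. The Heisenberg Lie superalgebra $H(m,n)$ is capable if and only if $m=1$ and $n=0$.
   Context: All algebras are over a field $\mathbb{F}$ of characteristic $\neq 2,3$. $H(m,n)$ is the Lie superalgebra with even basis $x_1,\dots,x_{2m},z$, odd basis $y_1,\dots,y_n$, and nonzero brackets $[x_i,x_{m+i}]=z$ ($1\le i\le m$), $[y_j,y_j]=z$ ($1\le j\le n$). A Lie superalgebra $L$ is capable if $L\cong H/Z(H)$ for some Lie superalgebra $H$, where $Z(H)$ denotes the center. *)

From HB Require Import structures.
From mathcomp Require Import all_boot all_order all_algebra.
Set Implicit Arguments. Unset Strict Implicit. Unset Printing Implicit Defensive.
Import GRing.Theory.
Local Open Scope ring_scope.

(* A "super bracket" over F: an even part ev, an odd part od (vector spaces over F),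
   and the three homogeneous components of the bracket
     [x0,y0] = b00 x0 y0 (even), [x0,y1] = b01 x0 y1 (odd), [x1,y1] = b11 x1 y1 (even);
   [x1,y0] is defined as -[y0,x1] = - b01 y0 x1 (super skew-symmetry built in). *)
Record SuperBracket (F : fieldType) := {
  ev : lmodType F;
  od : lmodType F;
  b00 : ev -> ev -> ev;
  b01 : ev -> od -> od;
  b11 : od -> od -> ev }.

Arguments b00 {F} s _ _.
Arguments b01 {F} s _ _.
Arguments b11 {F} s _ _.

Section SB.
Variables (F : fieldType) (L : SuperBracket F).

Definition elt := (ev L * od L)%type.
Definition padd (u v : elt) : elt := (u.1 + v.1, u.2 + v.2).
Definition psub (u v : elt) : elt := (u.1 - v.1, u.2 - v.2).

Definition pbr (u v : elt) : elt :=
  (b00 L u.1 v.1 + b11 L u.2 v.2, b01 L u.1 v.2 - b01 L v.1 u.2).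

Definition homog (p : bool) (x0 : ev L) (x1 : od L) : elt :=
  if p then (0, x1) else (x0, 0).

Definition is_lsalg : Prop :=
  (forall a x y z, b00 L (a *: x + y) z = a *: b00 L x z + b00 L y z) /\
  (forall a x y z, b00 L z (a *: x + y) = a *: b00 L z x + b00 L z y) /\
  (forall a x y z, b01 L (a *: x + y) z = a *: b01 L x z + b01 L y z) /\
  (forall a x y z, b01 L z (a *: x + y) = a *: b01 L z x + b01 L z y) /\
  (forall a x y z, b11 L (a *: x + y) z = a *: b11 L x z + b11 L y z) /\
  (forall a x y z, b11 L z (a *: x + y) = a *: b11 L z x + b11 L z y) /\
  (forall x y, b00 L x y = - b00 L y x) /\
  (forall x y, b11 L x y = b11 L y x) /\
  (* super Jacobi identity on homogeneous elements:
     [x,[y,z]] = [[x,y],z] + (-1)^{|x||y|} [y,[x,z]] *)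
  (forall (p q r : bool) x0 x1 y0 y1 z0 z1,
     let x := homog p x0 x1 in let y := homog q y0 y1 in let z := homog r z0 z1 in
     pbr x (pbr y z) =
       (if p && q then psub else padd) (pbr (pbr x y) z) (pbr y (pbr x z))).

Definition center (u : elt) : Prop := forall v, pbr u v = (0, 0).
End SB.

Definition is_hom (F : fieldType) (H L : SuperBracket F)
  (f0 : ev H -> ev L) (f1 : od H -> od L) : Prop :=
  (forall a x y, f0 (a *: x + y) = a *: f0 x + f0 y) /\
  (forall a x y, f1 (a *: x + y) = a *: f1 x + f1 y) /\
  (forall x y, f0 (b00 H x y) = b00 L (f0 x) (f0 y)) /\
  (forall x y, f1 (b01 H x y) = b01 L (f0 x) (f1 y)) /\
  (forall x y, f0 (b11 H x y) = b11 L (f1 x) (f1 y)).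

(* L is capable iff L ≅ H / Z(H) for some Lie superalgebra H, i.e. (first isomorphism
   theorem) there is a surjective homomorphism H -> L whose kernel is exactly Z(H). *)
Definition capable (F : fieldType) (L : SuperBracket F) : Prop :=
  exists (H : SuperBracket F) (f0 : ev H -> ev L) (f1 : od H -> od L),
    is_lsalg H /\ is_hom f0 f1 /\
    (forall y, exists x, f0 x = y) /\ (forall y, exists x, f1 x = y) /\
    (forall u : elt H, (f0 u.1 = 0 /\ f1 u.2 = 0) <-> center u).

(* Heisenberg Lie superalgebra H(m,n):
   even part = F^m * F^m * F, with x_i = (e_i,0,0), x_{m+i} = (0,e_i,0), z = (0,0,1);
   odd part = F^n with y_j = e_j.
   [(a,b,c),(a',b',c')] = (0,0, a.b' - a'.b),  [y,y'] = (0,0, y.y'),  [even, odd] = 0. *)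
Definition dotv (F : fieldType) (k : nat) (u v : 'rV[F]_k) : F :=
  \sum_(i < k) u ord0 i * v ord0 i.

Definition HeisEv (F : fieldType) (m : nat) : lmodType F :=
  ('rV[F]_m * 'rV[F]_m * F^o)%type.

Definition Heis (F : fieldType) (m n : nat) : SuperBracket F :=
  {| ev := HeisEv F m;
     od := 'rV[F]_n;
     b00 := fun (u v : HeisEv F m) =>
              ((0 : 'rV[F]_m), (0 : 'rV[F]_m),
               (dotv u.1.1 v.1.2 - dotv v.1.1 u.1.2 : F^o));
     b01 := fun _ _ => 0;
     b11 := fun (y y' : 'rV[F]_n) =>
              ((0 : 'rV[F]_m), (0 : 'rV[F]_m), (dotv y y' : F^o)) |}.

From mathcomp Require Import all_boot all_order all_algebra.
From mathcomp Require Import ring.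
Set Implicit Arguments. Unset Strict Implicit.
Import GRing.Theory.
Local Open Scope ring_scope.

(* Suppose f : H -> H(m,n) is onto with kernel Z(H), and let Z be a lift of the
   central generator z.  Everything killed by f is central, so any u with f u in
   F z brackets exactly like (f u)_z Z.  If n > 0 take Z = [Y, Y] for a lift Y of
   an odd basis vector: the super Jacobi identity gives 3 [Z, Y] = 0, and then
   [Z, H] = 0.  If m > 1 take Z = [X1, P1] for lifts of x_1, x_{m+1}; Z differs
   from [X2, P2] by a central element, so X1 and P1 commute with Z, and Jacobi
   makes Z central.  Either way f Z = z would vanish.  Conversely H(1,0) is the
   central quotient of the free nilpotent Lie algebra of class 3 on two
   generators. *)

Section LinearFun.
Variables (F : fieldType) (U V : lmodType F) (f : U -> V).
Hypothesis f_lin : linear f.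

Lemma linear_fun0 : f 0 = 0.
Proof. by rewrite -[0 in LHS]subr0 (zmod_morphism_linear f_lin) subrr. Qed.

Lemma linear_funN x : f (- x) = - f x.
Proof. by rewrite -[- x]sub0r (zmod_morphism_linear f_lin) linear_fun0 sub0r. Qed.

End LinearFun.

Section SuperBracketTheory.
Variables (F : fieldType) (H : SuperBracket F).

Definition central_ev (u0 : ev H) :=
  (forall x, b00 H u0 x = 0) /\ (forall y, b01 H u0 y = 0).

Definition central_od (u1 : od H) :=
  (forall y, b11 H u1 y = 0) /\ (forall x, b01 H x u1 = 0).

Hypothesis H_lsalg : is_lsalg H.

Lemma b00_linearl z : linear (b00 H ^~ z).
Proof. by case: H_lsalg => h _ a x y; exact: h. Qed.
Lemma b00_linearr z : linear (b00 H z).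
Proof. by case: H_lsalg => _ [h _] a x y; exact: h. Qed.
Lemma b01_linearl z : linear (b01 H ^~ z).
Proof. by case: H_lsalg => _ [_ [h _]] a x y; exact: h. Qed.
Lemma b01_linearr z : linear (b01 H z).
Proof. by case: H_lsalg => _ [_ [_ [h _]]] a x y; exact: h. Qed.
Lemma b11_linearl z : linear (b11 H ^~ z).
Proof. by case: H_lsalg => _ [_ [_ [_ [h _]]]] a x y; exact: h. Qed.
Lemma b11_linearr z : linear (b11 H z).
Proof. by case: H_lsalg => _ [_ [_ [_ [_ [h _]]]]] a x y; exact: h. Qed.

Lemma b00C x y : b00 H x y = - b00 H y x.
Proof. by case: H_lsalg => _ [_ [_ [_ [_ [_ [h _]]]]]]. Qed.
Lemma b11C x y : b11 H x y = b11 H y x.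
Proof. by case: H_lsalg => _ [_ [_ [_ [_ [_ [_ [h _]]]]]]]. Qed.

Lemma b00_0l x : b00 H 0 x = 0. Proof. exact: linear_fun0 (b00_linearl x). Qed.
Lemma b00_0r x : b00 H x 0 = 0. Proof. exact: linear_fun0 (b00_linearr x). Qed.
Lemma b01_0l x : b01 H 0 x = 0. Proof. exact: linear_fun0 (b01_linearl x). Qed.
Lemma b01_0r x : b01 H x 0 = 0. Proof. exact: linear_fun0 (b01_linearr x). Qed.
Lemma b11_0l x : b11 H 0 x = 0. Proof. exact: linear_fun0 (b11_linearl x). Qed.
Lemma b11_0r x : b11 H x 0 = 0. Proof. exact: linear_fun0 (b11_linearr x). Qed.

Let bracket0E := (b00_0l, b00_0r, b01_0l, b01_0r, b11_0l, b11_0r,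
  oppr0, addr0, add0r, subr0, sub0r).

Lemma super_jacobi p q r x0 x1 y0 y1 z0 z1 :
  let x := homog p x0 x1 in let y := homog q y0 y1 in let z := homog r z0 z1 in
  pbr x (pbr y z) =
    (if p && q then @psub _ H else @padd _ H) (pbr (pbr x y) z) (pbr y (pbr x z)).
Proof. by case: H_lsalg => _ [_ [_ [_ [_ [_ [_ [_ ]]]]]]]; apply. Qed.

Lemma jacobi_eee x y z :
  b00 H x (b00 H y z) = b00 H (b00 H x y) z + b00 H y (b00 H x z).
Proof.
by have := congr1 fst (super_jacobi false false false x 0 y 0 z 0); rewrite /= !bracket0E.
Qed.

Lemma jacobi_eeo x y w :
  b01 H x (b01 H y w) = b01 H (b00 H x y) w + b01 H y (b01 H x w).
Proof.
by have := congr1 snd (super_jacobi false false true x 0 y 0 0 w); rewrite /= !bracket0E.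
Qed.

Lemma jacobi_ooe u v w :
  b00 H (b11 H u v) w = - (b11 H u (b01 H w v) + b11 H v (b01 H w u)).
Proof.
have := congr1 fst (super_jacobi true true false 0 u 0 v w 0); rewrite /= !bracket0E.
rewrite !(linear_funN (b11_linearr _)) opprK => e.
by rewrite opprD e addrK.
Qed.

Lemma jacobi_ooo u v t :
  b01 H (b11 H u v) t + b01 H (b11 H u t) v + b01 H (b11 H v t) u = 0.
Proof.
have := congr1 snd (super_jacobi true true true 0 u 0 v 0 t); rewrite /= !bracket0E.
by rewrite opprK => <-; rewrite addNr.
Qed.

Lemma center_ev u0 : center (u0, 0) <-> central_ev u0.
Proof.
split=> [c | [c00 c01] [v0 v1]].
  split=> [x | y].
    by have := congr1 fst (c (x, 0)); rewrite /pbr /= !bracket0E.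
  by have := congr1 snd (c (0, y)); rewrite /pbr /= !bracket0E.
by rewrite /pbr /= c00 c01 !bracket0E.
Qed.

Lemma center_od u1 : center (0, u1) -> central_od u1.
Proof.
move=> c; split=> [y | x].
  by have := congr1 fst (c (0, y)); rewrite /pbr /= !bracket0E.
have := congr1 snd (c (x, 0)); rewrite /pbr /= !bracket0E.
by move/eqP; rewrite oppr_eq0 => /eqP.
Qed.

End SuperBracketTheory.

Section CentralKernel.
Variables (F : fieldType) (H L : SuperBracket F).
Variables (f0 : ev H -> ev L) (f1 : od H -> od L).
Hypotheses (H_lsalg : is_lsalg H) (f_hom : is_hom f0 f1).
Hypothesis ker_center : forall u : elt H, (f0 u.1 = 0 /\ f1 u.2 = 0) <-> center u.

Lemma hom_ev_linear : linear f0. Proof. by case: f_hom. Qed.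
Lemma hom_od_linear : linear f1. Proof. by case: f_hom => _ []. Qed.
Lemma hom_b00 x y : f0 (b00 H x y) = b00 L (f0 x) (f0 y).
Proof. by case: f_hom => _ [_ []]. Qed.
Lemma hom_b01 x y : f1 (b01 H x y) = b01 L (f0 x) (f1 y).
Proof. by case: f_hom => _ [_ [_ []]]. Qed.
Lemma hom_b11 x y : f0 (b11 H x y) = b11 L (f1 x) (f1 y).
Proof. by case: f_hom => _ [_ [_ [_ ]]]. Qed.

Lemma ker_ev_central u0 : f0 u0 = 0 -> central_ev u0.
Proof.
move=> fu0; apply/(center_ev H_lsalg)/ker_center; split=> //=.
exact: linear_fun0 hom_od_linear.
Qed.

Lemma ker_od_central u1 : f1 u1 = 0 -> central_od u1.
Proof.
move=> fu1; apply/(center_od H_lsalg)/ker_center; split=> //=.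
exact: linear_fun0 hom_ev_linear.
Qed.

Lemma central_ev_ker u0 : central_ev u0 -> f0 u0 = 0.
Proof. by move/(center_ev H_lsalg)/ker_center => []. Qed.

End CentralKernel.

Lemma dotv_delta (F : fieldType) k (i j : 'I_k) :
  dotv (delta_mx 0 i : 'rV[F]_k) (delta_mx 0 j) = (i == j)%:R.
Proof.
rewrite /dotv (bigD1 i) //= big1 => [|l /negbTE li]; last by rewrite !mxE li mul0r.
by rewrite !mxE !eqxx mul1r addr0.
Qed.

Lemma dotv0l (F : fieldType) k (v : 'rV[F]_k) : dotv 0 v = 0.
Proof. by rewrite /dotv big1 // => i _; rewrite mxE mul0r. Qed.

Lemma dotv0r (F : fieldType) k (v : 'rV[F]_k) : dotv v 0 = 0.
Proof. by rewrite /dotv big1 // => i _; rewrite mxE mulr0. Qed.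

Definition heis_z (F : fieldType) (m : nat) : HeisEv F m := (0, 0, 1).

Section HeisenbergQuotient.
Variables (F : fieldType) (m n : nat) (H : SuperBracket F).
Variables (f0 : ev H -> ev (Heis F m n)) (f1 : od H -> od (Heis F m n)).
Hypotheses (H_lsalg : is_lsalg H) (f_hom : is_hom f0 f1).
Hypothesis ker_center : forall u : elt H, (f0 u.1 = 0 /\ f1 u.2 = 0) <-> center u.

Lemma hom_b00_z x y : (f0 (b00 H x y)).1 = 0.
Proof. by rewrite (hom_b00 f_hom). Qed.

Lemma hom_b11_z x y : (f0 (b11 H x y)).1 = 0.
Proof. by rewrite (hom_b11 f_hom). Qed.

Lemma hom_b01_eq0 x y : f1 (b01 H x y) = 0.
Proof. by rewrite (hom_b01 f_hom). Qed.

Section LiftOfZ.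
Variable Z : ev H.
Hypothesis fZ : f0 Z = heis_z F m.

Lemma central_ev_along_z u : (f0 u).1 = 0 -> central_ev ((- (f0 u).2) *: Z + u).
Proof.
move=> fu; apply: (ker_ev_central H_lsalg f_hom ker_center).
rewrite (hom_ev_linear f_hom) fZ.
case: (f0 u) fu => [[a b] c] /= [-> ->].
congr (_, _, _); rewrite /GRing.scale /= ?scaler0 ?addr0 //.
by rewrite -[LHS]/(- c * 1 + c) mulr1 addNr.
Qed.

Lemma b00_along_z u w : (f0 u).1 = 0 -> b00 H u w = (f0 u).2 *: b00 H Z w.
Proof.
move/central_ev_along_z => [/(_ w) + _].
by rewrite (b00_linearl H_lsalg) scaleNr addrC => /eqP; rewrite subr_eq0 => /eqP.
Qed.

Lemma b01_along_z u y : (f0 u).1 = 0 -> b01 H u y = (f0 u).2 *: b01 H Z y.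
Proof.
move/central_ev_along_z => [_ /(_ y)].
by rewrite (b01_linearl H_lsalg) scaleNr addrC => /eqP; rewrite subr_eq0 => /eqP.
Qed.

Lemma lift_z_not_central : ~ central_ev Z.
Proof.
move/(central_ev_ker H_lsalg ker_center); rewrite fZ.
by move/(congr1 snd)/eqP; rewrite oner_eq0.
Qed.

End LiftOfZ.

Lemma odd_square_lift_contra Y :
  (3%:R : F) != 0 -> dotv (f1 Y) (f1 Y) = 1 -> False.
Proof.
move=> char3 fYY; set Z := b11 H Y Y.
have fZ : f0 Z = heis_z F m by rewrite (hom_b11 f_hom) /= fYY.
apply: (lift_z_not_central fZ); split=> [w | y].
  have [kY _] := ker_od_central H_lsalg f_hom ker_center (hom_b01_eq0 w Y).
  by rewrite jacobi_ooe // (b11C H_lsalg Y) kY addr0 oppr0.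
have ZY : b01 H Z Y = 0.
  have := jacobi_ooo H_lsalg Y Y Y; rewrite -/Z.
  have -> : b01 H Z Y + b01 H Z Y + b01 H Z Y = 3%:R *: b01 H Z Y.
    by rewrite scaler_nat !mulrS mulr0n addr0 addrA.
  by move/eqP; rewrite scaler_eq0 (negbTE char3) => /eqP.
have := jacobi_ooo H_lsalg Y Y y.
by rewrite -/Z (b01_along_z fZ _ (hom_b11_z _ _)) ZY scaler0 !addr0.
Qed.

Lemma symplectic_lifts_contra X1 P1 X2 P2 :
    f0 (b00 H X1 P1) = heis_z F m -> f0 (b00 H X2 P2) = heis_z F m ->
    f0 (b00 H X1 X2) = 0 -> f0 (b00 H X1 P2) = 0 ->
    f0 (b00 H P1 X2) = 0 -> f0 (b00 H P1 P2) = 0 -> False.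
Proof.
set Z := b00 H X1 P1 => fZ fZ2 fX1X2 fX1P2 fP1X2 fP1P2.
have ker0 := ker_ev_central H_lsalg f_hom ker_center.
have Z2E w : b00 H (b00 H X2 P2) w = b00 H Z w.
  by rewrite (b00_along_z fZ _ (hom_b00_z _ _)) fZ2 scale1r.
have commZ x : f0 (b00 H x X2) = 0 -> f0 (b00 H x P2) = 0 -> b00 H x Z = 0.
  move=> /ker0 [kX _] /ker0 [kP _].
  rewrite (b00C H_lsalg x) -Z2E -(b00C H_lsalg x) (jacobi_eee H_lsalg) kX.
  by rewrite (b00C H_lsalg X2) kP oppr0 addr0.
have commZ_bracket x s t : b00 H x Z = 0 -> b00 H x (b00 H s t) = 0.
  move=> xZ; rewrite (b00C H_lsalg x) (b00_along_z fZ _ (hom_b00_z _ _)).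
  by rewrite (b00C H_lsalg Z) xZ oppr0 scaler0 oppr0.
apply: (lift_z_not_central fZ); split=> [w | y].
  have := jacobi_eee H_lsalg X1 P1 w.
  rewrite (commZ_bracket X1) ?commZ // (commZ_bracket P1) ?commZ //.
  by rewrite addr0 => /esym.
have [_ kP] := ker_od_central H_lsalg f_hom ker_center (hom_b01_eq0 P1 y).
have [_ kX] := ker_od_central H_lsalg f_hom ker_center (hom_b01_eq0 X1 y).
by have := jacobi_eeo H_lsalg X1 P1 y; rewrite kP kX addr0 => /esym.
Qed.

Lemma heis_odd_contra :
  (3%:R : F) != 0 -> (0 < n)%N -> (forall y, exists x, f1 x = y) -> False.
Proof.
move=> char3 n_gt0 /(_ (delta_mx 0 (Ordinal n_gt0))) [Y fY].
by apply: (odd_square_lift_contra (Y := Y) char3); rewrite fY dotv_delta eqxx.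
Qed.

Lemma heis_even_contra : (1 < m)%N -> (forall y, exists x, f0 x = y) -> False.
Proof.
move=> m_gt1 surj0.
have [X1 fX1] := surj0 (delta_mx 0 (Ordinal (ltnW m_gt1)), 0, 0).
have [P1 fP1] := surj0 (0, delta_mx 0 (Ordinal (ltnW m_gt1)), 0).
have [X2 fX2] := surj0 (delta_mx 0 (Ordinal m_gt1), 0, 0).
have [P2 fP2] := surj0 (0, delta_mx 0 (Ordinal m_gt1), 0).
apply: (symplectic_lifts_contra (X1 := X1) (P1 := P1) (X2 := X2) (P2 := P2));
  rewrite (hom_b00 f_hom) ?(fX1, fP1, fX2, fP2) /=;
  by rewrite ?(dotv_delta, dotv0l, dotv0r) /= subr0.
Qed.

End HeisenbergQuotient.

Section LieAlgebraAsSuper.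
Variables (F : fieldType) (V : lmodType F) (br : V -> V -> V).

Definition lie_super : SuperBracket F :=
  {| ev := V; od := 'rV[F]_0; b00 := br; b01 := fun _ _ => 0; b11 := fun _ _ => 0 |}.

Hypothesis br_linearl : forall z, linear (br ^~ z).
Hypothesis brC : forall x y, br x y = - br y x.
Hypothesis br_jacobi : forall x y z, br x (br y z) = br (br x y) z + br y (br x z).

Lemma lie_super_lsalg : is_lsalg lie_super.
Proof.
have br_linearr z : linear (br z).
  by move=> a x y; rewrite !(brC z) br_linearl opprD scalerN.
have br0l x : br 0 x = 0 := linear_fun0 (br_linearl x).
split; first by move=> a x y z; apply: br_linearl.
split; first by move=> a x y z; apply: br_linearr.
do 4 (split; first by move=> a x y z /=; rewrite scaler0 addr0).
split; first exact: brC.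
split; first by [].
move=> p q r x0 x1 y0 y1 z0 z1.
apply: injective_projections; last by apply/matrixP => ? [].
by case: p; case: q; case: r; rewrite /= !addr0;
  first [exact: br_jacobi | rewrite !br0l subrr].
Qed.

Lemma lie_super_center u : center (L := lie_super) u <-> forall v, br u.1 v = 0.
Proof.
split=> [c v | c v]; first by have := congr1 fst (c (v, 0)); rewrite /= addr0.
by apply: injective_projections; [rewrite /= c addr0 | apply/matrixP => ? []].
Qed.

End LieAlgebraAsSuper.

Definition cover_ev (F : fieldType) : lmodType F :=
  (F^o * F^o * F^o * F^o * F^o)%type.

(* The free nilpotent Lie algebra of class 3 on e1, e2:
   [e1, e2] = e3, [e1, e3] = e4, [e2, e3] = e5, with center span(e4, e5). *)
Definition cover_br (F : fieldType) (u v : cover_ev F) : cover_ev F :=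
  (0, 0, u.1.1.1.1 * v.1.1.1.2 - u.1.1.1.2 * v.1.1.1.1,
   u.1.1.1.1 * v.1.1.2 - u.1.1.2 * v.1.1.1.1,
   u.1.1.1.2 * v.1.1.2 - u.1.1.2 * v.1.1.1.2).

Ltac tuple_ring :=
  repeat (apply: injective_projections => /=); rewrite /GRing.scale /=; ring.

Lemma cover_br_linearl (F : fieldType) (z : cover_ev F) : linear (@cover_br F ^~ z).
Proof.
by move: z => [[[[? ?] ?] ?] ?] a [[[[? ?] ?] ?] ?] [[[[? ?] ?] ?] ?]; tuple_ring.
Qed.

Lemma cover_brC (F : fieldType) (x y : cover_ev F) : cover_br x y = - cover_br y x.
Proof. by move: x y => [[[[? ?] ?] ?] ?] [[[[? ?] ?] ?] ?]; tuple_ring. Qed.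

Lemma cover_br_jacobi (F : fieldType) (x y z : cover_ev F) :
  cover_br x (cover_br y z) = cover_br (cover_br x y) z + cover_br y (cover_br x z).
Proof.
by move: x y z => [[[[? ?] ?] ?] ?] [[[[? ?] ?] ?] ?] [[[[? ?] ?] ?] ?]; tuple_ring.
Qed.

Definition heis_cover (F : fieldType) := lie_super (@cover_br F).

Lemma heis_cover_lsalg (F : fieldType) : is_lsalg (heis_cover F).
Proof.
apply: lie_super_lsalg;
  [exact: cover_br_linearl | exact: cover_brC | exact: cover_br_jacobi].
Qed.

Lemma cover_br_central (F : fieldType) (x1 x2 x3 x4 x5 : F) :
  (forall v, cover_br (x1, x2, x3, x4, x5) v = 0) <-> [/\ x1 = 0, x2 = 0 & x3 = 0].
Proof.
split=> [c | [-> -> ->] [[[[? ?] ?] ?] ?]]; last by tuple_ring.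
have := congr1 (fun t => t.1.1.2) (c (0, 1, 0, 0, 0)).
have := congr1 (fun t => t.1.1.2) (c (1, 0, 0, 0, 0)).
have := congr1 (fun t => t.1.2) (c (1, 0, 0, 0, 0)).
rewrite /cover_br /= !(mulr0, mulr1, subr0, sub0r).
by move=> /eqP; rewrite oppr_eq0 => /eqP-> /eqP; rewrite oppr_eq0 => /eqP-> ->.
Qed.

Definition heis_cover_proj (F : fieldType) (u : cover_ev F) : HeisEv F 1 :=
  (const_mx u.1.1.1.1, const_mx u.1.1.1.2, u.1.1.2).

Lemma const_mx_linear (F : fieldType) k l :
  linear (@const_mx F k l : F^o -> 'M[F]_(k, l)).
Proof. by move=> a x y; apply/matrixP => i j; rewrite !mxE. Qed.

Lemma const_mx1_eq0 (F : fieldType) (x : F) : const_mx x = 0 :> 'rV[F]_1 -> x = 0.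
Proof. by move/matrixP => /(_ ord0 ord0); rewrite !mxE. Qed.

Lemma heis_cover_proj_hom (F : fieldType) :
  @is_hom F (heis_cover F) (Heis F 1 0) (@heis_cover_proj F) id.
Proof.
have cmx0 := linear_fun0 (@const_mx_linear F 1 1).
split; first by move=> a x y; rewrite /heis_cover_proj /= !const_mx_linear.
split; first by [].
split.
  move=> [[[[x1 x2] ?] ?] ?] [[[[y1 y2] ?] ?] ?].
  by rewrite /heis_cover_proj /= /dotv !big_ord1 !mxE cmx0 [y1 * x2]mulrC.
split; first by move=> x y; apply/matrixP => ? [].
by move=> x y; rewrite /heis_cover_proj /= /dotv big_ord0 cmx0.
Qed.

Lemma heis_cover_proj_surj (F : fieldType) (y : HeisEv F 1) :
  exists x, heis_cover_proj x = y.
Proof.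
case: y => [[a b] c]; exists (a 0 0, b 0 0, c, 0, 0).
by congr (_, _, _); apply/matrixP => i j; rewrite !mxE !ord1.
Qed.

Lemma capable_heis10 (F : fieldType) : capable (Heis F 1 0).
Proof.
exists (heis_cover F), (@heis_cover_proj F), id.
split; first exact: heis_cover_lsalg.
split; first exact: heis_cover_proj_hom.
split; first exact: heis_cover_proj_surj.
split; first by move=> y; exists y.
move=> [[[[[x1 x2] x3] x4] x5] w].
rewrite lie_super_center cover_br_central (thinmx0 w) /heis_cover_proj /=.
split=> [[[/const_mx1_eq0 -> /const_mx1_eq0 ->] ->] // | [-> -> ->]].
by rewrite (linear_fun0 (@const_mx_linear F 1 1)).
Qed.

Theorem mainTheorem3 (F : fieldType) (hF2 : (2%:R : F) != 0) (hF3 : (3%:R : F) != 0)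
  (m n : nat) (hmn : (1 <= m + n)%N) :
  capable (Heis F m n) <-> (m = 1%N /\ n = 0%N).
Proof.
split=> [[H [f0 [f1 [H_lsalg [f_hom [surj0 [surj1 ker_center]]]]]]] | [-> ->]];
  last exact: capable_heis10.
have [n0 | n_gt0] := posnP n; last first.
  by case: (heis_odd_contra H_lsalg f_hom ker_center hF3 n_gt0 surj1).
have [m_gt1 | m_le1] := ltnP 1 m.
  by case: (heis_even_contra H_lsalg f_hom ker_center m_gt1 surj0).
by rewrite n0 addn0 in hmn; split=> //; apply/eqP; rewrite eqn_leq m_le1.
Qed.
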